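(* For every positive integer $n$, $D''_n\equiv 0\pmod 3$.
   Context: For $n\in\mathbb{N}$, the Domb numbers are $D_n=\sum_{k=0}^n\binom{n}{k}^2\binom{2k}{k}\binom{2(n-k)}{n-k}$. For a sequence $(x_k)_{k\ge0}$, its binomial transform is $x'_n=\sum_{k=0}^n\binom{n}{k}x_k$; $D'_n=\sum_{k=0}^n\binom nk D_k$ and $D''_n=\sum_{k=0}^n\binom{n}{k}D'_k$. *)

From mathcomp Require Import all_boot.
Set Implicit Arguments. Unset Strict Implicit. Unset Printing Implicit Defensive.

Definition domb (n : nat) : nat :=
  \sum_(0 <= k < n.+1) 'C(n, k) ^ 2 * 'C(2 * k, k) * 'C(2 * (n - k), n - k).

Definition binom_transform (x : nat -> nat) (n : nat) : nat :=
  \sum_(0 <= k < n.+1) 'C(n, k) * x k.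

Definition domb' : nat -> nat := binom_transform domb.
Definition domb'' : nat -> nat := binom_transform domb'.

(* Lucas's theorem for p = 3 factors every summand of the Domb number D_(3m+r),
   r < 3, modulo 3 as the corresponding summand of D_m times a summand of D_r, and
   D_0 = D_1 = D_2 = 1 (mod 3), so D_n = 1 (mod 3) for all n.  Binomial
   transforms respect congruences, and by the binomial theorem the transform of
   c^k is (c+1)^n; hence D'_n = 2^n and D''_n = 3^n = 0 (mod 3) for n > 0. *)
From mathcomp Require Import all_boot.
From mathcomp Require Import zify.

Set Implicit Arguments.
Unset Strict Implicit.
Unset Printing Implicit Defensive.

Lemma congr_modnD d x y x' y' :
  x = x' %[mod d] -> y = y' %[mod d] -> x + y = x' + y' %[mod d].
Proof. by move=> hx hy; rewrite -modnDm hx hy modnDm. Qed.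

Lemma congr_modnM d x y x' y' :
  x = x' %[mod d] -> y = y' %[mod d] -> x * y = x' * y' %[mod d].
Proof. by move=> hx hy; rewrite -modnMm hx hy modnMm. Qed.

Lemma binS3 n k :
  'C(n.+3, k.+3) = 'C(n, k) + 3 * ('C(n, k.+1) + 'C(n, k.+2)) + 'C(n, k.+3).
Proof. rewrite !binS; lia. Qed.

Lemma bin_add3_small n k : k < 3 -> 'C(n.+3, k) = 'C(n, k) %[mod 3].
Proof.
case: k => [|[|[|k]]] // _; first by rewrite !bin0.
  by rewrite !bin1 -addn3 modnDr.
rewrite !binS !bin1 !bin0.
have -> : 'C(n, 2) + n + (n + 1) + (n + 1 + 1) = 3 * (n + 1) + 'C(n, 2) by lia.
by rewrite mulnC modnMDl.
Qed.

Lemma lucas_mod3 m j a b : a < 3 -> b < 3 ->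
  'C(3 * m + a, 3 * j + b) = 'C(m, j) * 'C(a, b) %[mod 3].
Proof.
move=> ha hb; elim: m j => [|m IHm] [|j].
- by rewrite !muln0 !add0n bin0 mul1n.
- by rewrite bin_small ?bin0n //; lia.
- have -> : 3 * m.+1 + a = (3 * m + a).+3 by lia.
  by rewrite muln0 add0n bin_add3_small // -(add0n b) -(muln0 3) IHm !bin0.
have -> : 3 * m.+1 + a = (3 * m + a).+3 by lia.
have -> : 3 * j.+1 + b = (3 * j + b).+3 by lia.
rewrite binS3 -addnA addnCA mulnC modnMDl.
have -> : (3 * j + b).+3 = 3 * j.+1 + b by lia.
by rewrite -modnDm !IHm modnDm binS mulnDl addnC.
Qed.

Lemma bin_central_mod3 j b : b < 3 ->
  'C(2 * (3 * j + b), 3 * j + b) = 'C(2 * j, j) * 'C(2 * b, b) %[mod 3].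
Proof.
case: b => [|[|[|b]]] // _.
- have -> : 2 * (3 * j + 0) = 3 * (2 * j) + 0 by lia.
  by rewrite lucas_mod3.
- have -> : 2 * (3 * j + 1) = 3 * (2 * j) + 2 by lia.
  by rewrite lucas_mod3.
have -> : 2 * (3 * j + 2) = 3 * (2 * j + 1) + 1 by lia.
rewrite lucas_mod3 // (@bin_small 1 2) // muln0.
by rewrite (_ : 'C(2 * 2, 2) = 2 * 3) // mulnA modnMl.
Qed.

Definition domb_term n k := 'C(n, k) ^ 2 * 'C(2 * k, k) * 'C(2 * (n - k), n - k).

Lemma domb_termE n k : domb_term n k =
  'C(n, k) * ('C(n, k) * 'C(2 * k, k) * 'C(2 * (n - k), n - k)).
Proof. by rewrite /domb_term; lia. Qed.

Lemma domb_term_mul m r j b : domb_term m j * domb_term r b =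
  ('C(m, j) * 'C(r, b)) ^ 2 * ('C(2 * j, j) * 'C(2 * b, b))
  * ('C(2 * (m - j), m - j) * 'C(2 * (r - b), r - b)).
Proof. by rewrite /domb_term; lia. Qed.

Lemma domb_term_mod3 m r j b : r < 3 -> b < 3 ->
  domb_term (3 * m + r) (3 * j + b) = domb_term m j * domb_term r b %[mod 3].
Proof.
move=> hr hb.
have [/andP[le_jm le_br] | lt_digits] := boolP ((j <= m) && (b <= r)).
  rewrite {1}/domb_term domb_term_mul.
  have -> : 3 * m + r - (3 * j + b) = 3 * (m - j) + (r - b) by lia.
  apply: congr_modnM; first apply: congr_modnM.
  - by rewrite !expnS !expn0 !muln1; apply: congr_modnM; rewrite lucas_mod3.
  - exact: bin_central_mod3.
  - by rewrite bin_central_mod3 //; lia.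
(* Here the truncated differences n - k are junk, but the factor 'C(n, k) of
   both sides vanishes modulo 3. *)
have bin_digits0 : 'C(m, j) * 'C(r, b) = 0.
  by case/nandP: lt_digits; rewrite -ltnNge => /bin_small->; rewrite ?muln0.
by rewrite domb_term_mul bin_digits0 domb_termE -modnMml lucas_mod3 // bin_digits0.
Qed.

Lemma domb_term_sum_small r : r < 3 ->
  domb_term r 0 + domb_term r 1 + domb_term r 2 = 1 %[mod 3].
Proof. by case: r => [|[|[|r]]]. Qed.

Lemma big_nat_mul3 (F : nat -> nat) M :
  \sum_(0 <= k < 3 * M) F k =
  \sum_(0 <= j < M) (F (3 * j) + F (3 * j + 1) + F (3 * j + 2)).
Proof.
elim: M => [|M IHM]; first by rewrite muln0 !big_geq.
have -> : 3 * M.+1 = (3 * M).+3 by lia.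
by rewrite !big_nat_recr //= IHM addn1 addn2 !addnA.
Qed.

Lemma domb_widen n N : n < N -> domb n = \sum_(0 <= k < N) domb_term n k.
Proof.
move=> lt_nN; rewrite (big_cat_nat (leq0n n.+1) lt_nN) /=.
rewrite [X in _ + X]big_nat_cond [X in _ + X]big1 ?addn0 //.
move=> k /andP[/andP[lt_nk _] _].
by rewrite /domb_term bin_small.
Qed.

Lemma domb_term_block_mod3 m r j : r < 3 ->
  domb_term (3 * m + r) (3 * j) + domb_term (3 * m + r) (3 * j + 1)
    + domb_term (3 * m + r) (3 * j + 2)
  = domb_term m j * (domb_term r 0 + domb_term r 1 + domb_term r 2) %[mod 3].
Proof.
move=> hr; rewrite !mulnDr; apply: congr_modnD; first apply: congr_modnD.
- by rewrite -(addn0 (3 * j)) domb_term_mod3.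
- by rewrite domb_term_mod3.
- by rewrite domb_term_mod3.
Qed.

Lemma domb_digit m r : r < 3 -> domb (3 * m + r) = domb m %[mod 3].
Proof.
move=> hr; rewrite (@domb_widen _ (3 * m.+1)); last by lia.
rewrite big_nat_mul3 -modn_summ.
rewrite (eq_bigr _ (fun j _ => domb_term_block_mod3 m j hr)).
by rewrite modn_summ -big_distrl /= -modnMm domb_term_sum_small // modnMm muln1.
Qed.

Lemma domb_mod3 n : domb n = 1 %[mod 3].
Proof.
elim/ltn_ind: n => n IHn.
have [-> | n_gt0] := posnP n; first by rewrite /domb big_nat1.
rewrite (divn_eq n 3) mulnC domb_digit ?ltn_mod // IHn //.
by rewrite ltn_Pdiv.
Qed.

Lemma binom_transform_congr d x y n :
  (forall k, x k = y k %[mod d]) ->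
  binom_transform x n = binom_transform y n %[mod d].
Proof.
move=> xy; rewrite /binom_transform -modn_summ -[RHS]modn_summ.
by congr (_ %% d); apply: eq_bigr => k _; rewrite -modnMmr xy modnMmr.
Qed.

Lemma binom_transform_exp c n : binom_transform (expn c) n = c.+1 ^ n.
Proof.
rewrite /binom_transform big_mkord -[c.+1]add1n expnDn.
by apply: eq_bigr => i _; rewrite exp1n mul1n.
Qed.

Theorem lemma3p4 (n : nat) : 0 < n -> domb'' n = 0 %[mod 3].
Proof.
move=> n_gt0.
have domb'_mod3 k : domb' k = 2 ^ k %[mod 3].
  rewrite /domb' -binom_transform_exp; apply: binom_transform_congr => i.
  by rewrite domb_mod3 exp1n.
rewrite /domb'' (binom_transform_congr n domb'_mod3) binom_transform_exp.
by case: n n_gt0 => // n _; rewrite expnS modnMr.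
Qed.
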